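(* Let $\bm\Sigma=I_p$, $\sigma>0$, $n,\tilde n\ge1$, $1\le s\le p$, $b_0\ne0$, and let $\bm b\in\mathbb{R}^p$ satisfy $b_k\in\{-b_0,0,b_0\}$ for all $k$ and $\|\bm b\|_0=s$. Fix $1\le j\le p$ with $b_j\neq0$. Define $$\eta_j^{(os)}=\frac{\sqrt n b_j}{\Omega_{j,j}^{1/2}\sigma},\qquad \eta_j^{(ts)}=\frac{\sqrt n b_j}{\sqrt{(\Omega_{j,j}\bm b^{\intercal}\bm\Sigma\bm b+b_j^2)(1+n/\tilde n)+\Omega_{j,j}\sigma^2}},$$ with $\bm\Omega=\bm\Sigma^{-1}$. Then $|\eta_j^{(os)}|=\sqrt n|b_0|/\sigma$ and $$|\eta_j^{(ts)}|\le\min\Big\{\sqrt{\frac{n\wedge\tilde n}{s}},\ \frac{\sqrt n|b_0|}{\sigma}\Big\}.$$ Consequently the one-sample and two-sample powers $\Phi(|\eta|-\tau_\alpha)+\Phi(-|\eta|-\tau_\alpha)$ (with $\eta=\eta_j^{(os)}$, resp. $\eta_j^{(ts)}$) are given by these values.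
   Context: $\Phi$ is the standard normal CDF, $\tau_\alpha$ the $\alpha$-quantile of the standard normal, $a\wedge b=\min\{a,b\}$. The quantities $\eta_j^{(os)},\eta_j^{(ts)}$ are the signal strengths (means of the asymptotic $\sqrt n$-scaled $z$-statistics) for testing $\beta_j=0$ with one-sample data and with proxy data, respectively, when the true coefficient is $\bm b$. *)

From HB Require Import structures.
From mathcomp Require Import all_boot all_order all_algebra.
Set Implicit Arguments. Unset Strict Implicit. Unset Printing Implicit Defensive.
Import Order.TTheory GRing.Theory Num.Theory.
Local Open Scope ring_scope.

Definition l0norm (R : ringType) (p : nat) (b : 'cV[R]_p) : nat :=
  #|[set k : 'I_p | b k 0 != 0]|.

Definition eta_os (R : rcfType) (p : nat) (n : nat) (sigma : R)
    (Sigma : 'M[R]_p) (b : 'cV[R]_p) (j : 'I_p) : R :=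
  let Omega := invmx Sigma in
  Num.sqrt (n%:R) * b j 0 / (Num.sqrt (Omega j j) * sigma).

Definition eta_ts (R : rcfType) (p : nat) (n nt : nat) (sigma : R)
    (Sigma : 'M[R]_p) (b : 'cV[R]_p) (j : 'I_p) : R :=
  let Omega := invmx Sigma in
  Num.sqrt (n%:R) * b j 0 /
  Num.sqrt ((Omega j j * (b^T *m Sigma *m b) 0 0 + b j 0 ^+ 2)
              * (1 + n%:R / nt%:R) + Omega j j * sigma ^+ 2).

(** With [Sigma = I] the precision matrix is [I], so [eta_os] reduces to
    [sqrt n * b_j / sigma] with [|b_j| = |b0|].  In [eta_ts] the quadratic form
    [b^T b] equals [s b0^2] because [b] has exactly [s] entries [+-b0].  Keeping
    only [s b0^2 (1 + n/nt)] in the denominator bounds [eta_ts^2] by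
    [(n / (1 + n/nt)) / s <= min(n, nt) / s]; keeping only [sigma^2] bounds it
    by [n b0^2 / sigma^2]. *)

From HB Require Import structures.
From mathcomp Require Import all_boot all_order all_algebra.
From mathcomp Require Import ring.
Set Implicit Arguments. Unset Strict Implicit. Unset Printing Implicit Defensive.
Import Order.TTheory GRing.Theory Num.Theory.
Local Open Scope ring_scope.

Lemma sqr_ternary (R : pzRingType) (b0 x : R) :
  x \in [:: - b0; 0; b0] -> x != 0 -> x ^+ 2 = b0 ^+ 2.
Proof.
rewrite !inE => /orP[/eqP->|/orP[/eqP->|/eqP->]] //; last by rewrite eqxx.
by rewrite sqrrN.
Qed.

Lemma ternary_dotE (R : nzRingType) (p : nat) (b0 : R) (b : 'cV[R]_p) :
  (forall k, b k 0 \in [:: - b0; 0; b0]) ->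
  (b^T *m b) 0 0 = (l0norm b)%:R * b0 ^+ 2.
Proof.
move=> bk; rewrite mxE (bigID (fun k => b k 0 != 0)) /=.
rewrite [X in _ + X]big1 => [|k /negPn/eqP->]; last by rewrite mulr0.
rewrite addr0 (eq_bigr (fun _ => b0 ^+ 2)) => [|k bk0]; last first.
  by rewrite mxE -expr2 (sqr_ternary (bk k)).
by rewrite sumr_const /l0norm cardsE mulr_natl.
Qed.

Section UnitCovariance.
Variables (R : rcfType) (p n nt : nat) (sigma : R) (b : 'cV[R]_p) (j : 'I_p).

Lemma eta_os1 : eta_os n sigma 1%:M b j = Num.sqrt n%:R * b j 0 / sigma.
Proof. by rewrite /eta_os invmx1 mxE eqxx sqrtr1 mul1r. Qed.

Lemma eta_ts1 :
  eta_ts n nt sigma 1%:M b j =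
  Num.sqrt n%:R * b j 0 /
  Num.sqrt (((b^T *m b) 0 0 + b j 0 ^+ 2) * (1 + n%:R / nt%:R) + sigma ^+ 2).
Proof. by rewrite /eta_ts invmx1 mulmx1 mxE eqxx !mul1r. Qed.

End UnitCovariance.

Lemma normr_sqrt_mul_div (R : rcfType) (N x d : R) :
  0 < d -> `|Num.sqrt N * x / d| = Num.sqrt N * `|x| / d.
Proof.
by move=> d0; rewrite !normrM normfV ger0_norm ?sqrtr_ge0 // (gtr0_norm d0).
Qed.

Lemma sqrt_mul_norm_div (R : rcfType) (N x d : R) :
  0 <= N -> 0 < d -> Num.sqrt N * `|x| / d = Num.sqrt (N * x ^+ 2 / d ^+ 2).
Proof.
move=> N0 d0; rewrite (sqrtrM _ (mulr_ge0 N0 (sqr_ge0 x))) (sqrtrM _ N0).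
by rewrite (sqrtrV (sqr_ge0 d)) !sqrtr_sqr (gtr0_norm d0).
Qed.

Lemma div_addl_le (R : numFieldType) (a x v : R) :
  0 <= a -> 0 <= x -> 0 < v -> a / (x + v) <= a / v.
Proof.
move=> a0 x0 v0; apply: ler_wpM2l => //.
by rewrite lef_pV2 ?posrE ?ltr_wpDl // lerDr.
Qed.

Lemma div_1addr_le_min (R : realFieldType) (N T : R) :
  0 < N -> 0 < T -> N / (1 + N / T) <= Num.min N T.
Proof.
move=> N0 T0; have NT0 : 0 <= N / T by rewrite divr_ge0 ?ltW.
rewrite le_min !ler_pdivrMr ?ltr_wpDr //; apply/andP; split.
  by rewrite ler_pMr // lerDl.
by rewrite mulrDr mulr1 mulrCA divff ?gt_eqF // mulr1 lerDr ltW.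
Qed.

Lemma proxy_snr_le_min (R : realFieldType) (N T S B v : R) :
  0 < N -> 0 < T -> 0 < S -> 0 < B -> 0 <= v ->
  N * B / ((S * B + B) * (1 + N / T) + v) <= Num.min N T / S.
Proof.
move=> N0 T0 S0 B0 v0; have D0 : 0 < 1 + N / T by rewrite ltr_wpDr ?divr_ge0 ?ltW.
have SBD0 : 0 < S * B * (1 + N / T) by rewrite !mulr_gt0.
have den_le : S * B * (1 + N / T) <= (S * B + B) * (1 + N / T) + v.
  by rewrite mulrDl -addrA lerDl addr_ge0 // mulr_ge0 ?ltW.
apply: (le_trans (_ : _ <= N * B / (S * B * (1 + N / T)))).
  apply: ler_wpM2l; first by rewrite mulr_ge0 ?ltW.
  by rewrite lef_pV2 ?posrE // (lt_le_trans SBD0 den_le).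
have -> : N * B / (S * B * (1 + N / T)) = N / (1 + N / T) / S.
  by field; rewrite !gt_eqF ?addr_gt0.
by apply: ler_wpM2r; [rewrite invr_ge0 ltW | exact: div_1addr_le_min].
Qed.

Theorem corollary1 (R : rcfType) (p n nt s : nat) (sigma b0 : R)
    (b : 'cV[R]_p) (j : 'I_p) :
  0 < sigma -> (1 <= n)%N -> (1 <= nt)%N -> (1 <= s <= p)%N -> b0 != 0 ->
  (forall k : 'I_p, b k 0 \in [:: - b0; 0; b0]) ->
  l0norm b = s ->
  b j 0 != 0 ->
  `| eta_os n sigma 1%:M b j | = Num.sqrt (n%:R) * `|b0| / sigma /\
  `| eta_ts n nt sigma 1%:M b j |
    <= Num.min (Num.sqrt ((minn n nt)%:R / s%:R)) (Num.sqrt (n%:R) * `|b0| / sigma).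
Proof.
move=> sigma0 n1 nt1 /andP[s1 _] b00 bk l0 bj0.
have bjE : b j 0 ^+ 2 = b0 ^+ 2 := sqr_ternary (bk j) bj0.
have nbj : `|b j 0| = `|b0| by rewrite -!sqrtr_sqr bjE.
rewrite eta_os1 eta_ts1 (ternary_dotE bk) l0 bjE.
set X := (_ * (1 + _)); set D := X + _.
have X0 : 0 <= X.
  apply: mulr_ge0; first exact: addr_ge0 (mulr_ge0 (ler0n _ _) (sqr_ge0 _)) (sqr_ge0 _).
  exact: addr_ge0 ler01 (divr_ge0 (ler0n _ _) (ler0n _ _)).
have D0 : 0 < D by rewrite ltr_wpDl ?exprn_gt0.
rewrite !normr_sqrt_mul_div ?sqrtr_gt0 // nbj; split=> //.
rewrite !sqrt_mul_norm_div ?ler0n ?sqrtr_gt0 // (sqr_sqrtr (ltW D0)) natr_min.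
rewrite le_min; apply/andP; split; apply: ler_wsqrtr.
  by rewrite proxy_snr_le_min ?ltr0n ?exprn_even_gt0 ?sqr_ge0.
exact: div_addl_le (mulr_ge0 (ler0n _ _) (sqr_ge0 _)) X0 (exprn_gt0 _ sigma0).
Qed.
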